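(* Let $d\ge2$, let $\Omega=\{x\in\mathbb R^d:\ \ell_j(x)>b_j,\ j=1,\dots,m\}$ be a nonempty bounded open convex polytope, and suppose $\mathfrak E=\{e_1,\dots,e_p\}\subset\mathbb R^d$ is weakly incoming to $\Omega$. Let $x_0\in\overline\Omega$ and $k=\mathrm c(x_0)$. Then there exist $r>0$ and $I\subset\{1,\dots,m\}$ with $\#I=k$ such that $$\Omega\cap B(x_0,r)=B(x_0,r)\cap\Big(\bigcap_{i\in I}H_i^+\Big).$$ Further, there exist $\beta_1,\dots,\beta_k\in\{1,\dots,p\}$, $\theta_1,\dots,\theta_k\in\{\pm1\}$ and a bijection $\{1,\dots,k\}\ni n\mapsto i_n\in I$ such that for all $n\in\{1,\dots,k\}$: $\theta_ne_{\beta_n}$ is strictly incoming to $H_{i_n}$, and $\theta_ne_{\beta_n}$ is incoming to $H_{i_m}$ for all $m>n$.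
   Context: $\ell_j$ are linear forms on $\mathbb R^d$ and $b_j$ reals. $B(x_0,r)$ is the open ball. Define $\mathrm c:\mathbb R^d\to\mathbb N\cup\{+\infty\}$ by $\mathrm c(x)=0$ if $x\in\Omega$, $+\infty$ if $x\notin\overline\Omega$, $\#\{i:\ell_i(x)=b_i\}$ if $x\in\partial\Omega$. $\mathfrak E$ is weakly incoming to $\Omega$ if for every $x_0\in\partial\Omega$ there exist $\epsilon>0$, $\theta\in\{\pm1\}$, $e\in\mathfrak E$ with $\mathrm c(x_0+\theta te)<\mathrm c(x_0)$ for all $t\in]0,\epsilon]$. For each $k$, $H_k=\ker\ell_k$, $H_k^+=\{y:\ell_k(y)>b_k\}$, and $\nu_k$ is the unit vector orthogonal to $H_k$ with $\ell_k(\nu_k)>0$. A vector $u\ne0$ is incoming to $H_k$ if $\langle u,\nu_k\rangle\ge0$, and strictly incoming to $H_k$ if $\langle u,\nu_k\rangle>0$. *)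

(* Points of R^d are row vectors 'rV[R]_d;
   the topology on 'rV[R]_d is the product (= Euclidean) topology. *)
From HB Require Import structures.
From mathcomp Require Import all_boot all_order all_algebra.
From mathcomp Require Import all_classical all_reals all_analysis.
Set Implicit Arguments. Unset Strict Implicit. Unset Printing Implicit Defensive.
Import Order.TTheory GRing.Theory Num.Theory.
Import numFieldNormedType.Exports.
Local Open Scope classical_set_scope.
Local Open Scope ring_scope.

Section Defs.
Variables (R : realType) (d : nat).

Definition dotp (u v : 'rV[R]_d) : R := \sum_(i < d) u 0 i * v 0 i.
Definition enorm (u : 'rV[R]_d) : R := Num.sqrt (dotp u u).

(* the linear form ell_j(x) = <a_j, x>, given by its coefficient vector a_j *)
Definition lform (a : 'rV[R]_d) (x : 'rV[R]_d) : R := dotp a x.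

Definition eball (x0 : 'rV[R]_d) (r : R) : set 'rV[R]_d :=
  [set x | enorm (x - x0) < r].

Variable m : nat.
Variables (a : 'I_m -> 'rV[R]_d) (b : 'I_m -> R).

Definition Omega : set 'rV[R]_d := [set x | forall j, lform (a j) x > b j].

Definition Hplus (k : 'I_m) : set 'rV[R]_d := [set y | lform (a k) y > b k].

Definition nu (k : 'I_m) : 'rV[R]_d := (enorm (a k))^-1 *: a k.

Definition incoming (u : 'rV[R]_d) (k : 'I_m) : Prop := 0 <= dotp u (nu k).
Definition strictly_incoming (u : 'rV[R]_d) (k : 'I_m) : Prop := 0 < dotp u (nu k).

(* values in N ∪ {+oo}: Some n = n, None = +oo *)
Definition ltc (x y : option nat) : bool :=
  match x, y with
  | Some n1, Some n2 => (n1 < n2)%N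
  | Some _, None => true
  | None, _ => false
  end.

Definition cfun (x : 'rV[R]_d) : option nat :=
  if `[< Omega x >] then Some 0%N
  else if `[< closure Omega x >] then Some #|[set i : 'I_m | lform (a i) x == b i]|
  else None.

Definition weakly_incoming (p : nat) (e : 'I_p -> 'rV[R]_d) : Prop :=
  forall x0, (closure Omega `\` Omega) x0 ->
    exists eps : R, 0 < eps /\ exists theta : R, (theta = 1 \/ theta = -1) /\
      exists j : 'I_p, forall t : R, 0 < t -> t <= eps ->
        ltc (cfun (x0 + (theta * t) *: e j)) (cfun x0).

End Defs.

From HB Require Import structures.
From mathcomp Require Import all_boot all_order all_algebra.
From mathcomp Require Import all_classical all_reals all_analysis.
Import Order.TTheory GRing.Theory Num.Theory.
Import numFieldNormedType.Exports.
Local Open Scope classical_set_scope.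
Local Open Scope ring_scope.
Set Implicit Arguments. Unset Strict Implicit.

(* Near x0 only the active constraints matter, since the inactive ones hold
   strictly at x0 and persist by continuity; this gives the local description
   of Omega.  For the ordering, weak incomingness at a boundary point x moves x
   a little along some u = +-e_j into a point x1 of the closure with fewer
   active constraints.  The constraints active at x but not at x1 are exactly
   those i with <u, a_i> > 0, while x1 in the closure forces <u, a_i> >= 0 for
   every i active at x, in particular for those still active at x1.  Listing
   the constraints dropped by u first and recursing at x1 yields the ordering. *)

Section InnerProduct.
Variables (R : realType) (d : nat).
Implicit Types (u v w : 'rV[R]_d) (c : R).

Lemma dotpC u v : dotp u v = dotp v u.
Proof. by apply: eq_bigr => i _; rewrite mulrC. Qed.

Lemma dotpDr u v w : dotp u (v + w) = dotp u v + dotp u w.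
Proof. by rewrite /dotp -big_split; apply: eq_bigr => i _; rewrite mxE mulrDr. Qed.

Lemma dotpZr u v c : dotp u (c *: v) = c * dotp u v.
Proof. by rewrite /dotp mulr_sumr; apply: eq_bigr => i _; rewrite mxE mulrCA. Qed.

Lemma dotp_ge0 u : 0 <= dotp u u.
Proof. by apply: sumr_ge0 => i _; rewrite -expr2 sqr_ge0. Qed.

Lemma sqr_coord_le_dotp u i : u 0 i ^+ 2 <= dotp u u.
Proof.
rewrite /dotp (bigD1 i) //= expr2 lerDl.
by apply: sumr_ge0 => j _; rewrite -expr2 sqr_ge0.
Qed.

Lemma enorm_gt0 u : u != 0 -> 0 < enorm u.
Proof.
move=> u0; have [i ui] : exists i, u 0 i != 0.
  apply/existsP; apply: contraNT u0; rewrite negb_exists => /forallP u_0.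
  by apply/eqP/rowP => i; rewrite mxE; apply/eqP/negPn/u_0.
rewrite /enorm sqrtr_gt0; apply: lt_le_trans (sqr_coord_le_dotp u i).
by rewrite lt_def sqr_ge0 andbT sqrf_eq0.
Qed.

Lemma lform_continuous u : continuous (lform u).
Proof.
apply: continuous_big => [|i _ x]; first exact: add_continuous.
by apply: continuousM; [exact: cst_continuous | exact: coord_continuous].
Qed.

Lemma mx_norm_le_enorm u : `|u| <= enorm u.
Proof.
rewrite [leLHS]/Num.Def.normr /= mx_normrE; apply/bigmax_leP; split => [|[i j] _].
  by rewrite /enorm sqrtr_ge0.
by rewrite (ord1 i) /enorm -sqrtr_sqr ler_sqrt ?dotp_ge0 ?sqr_coord_le_dotp.
Qed.

Lemma nbhs_eball x (A : set 'rV[R]_d) :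
  nbhs x A -> exists2 r : R, 0 < r & eball x r `<=` A.
Proof.
move=> /nbhs_ballP[r r0 rA]; exists r => // y /= xy; apply: rA.
rewrite mx_norm_ball /ball_ /= distrC; apply: le_lt_trans xy; exact: mx_norm_le_enorm.
Qed.

End InnerProduct.

Lemma nbhs_small_step (R : realType) (V : normedModType R) (x u : V) (A : set V)
    (eps : R) :
  nbhs x A -> 0 < eps -> exists t, [/\ 0 < t, t <= eps & A (x + t *: u)].
Proof.
move=> xA eps0.
have step_cvg : (x + t *: u) @[t --> (0 : R)] --> x.
  rewrite -{2}(addr0 x) -(scale0r u).
  by apply: cvgD; [exact: cvg_cst | apply: cvgZ; [exact: cvg_id | exact: cvg_cst]].
have : \forall t \near 0^'+, [/\ 0 < t, t <= eps & A (x + t *: u)].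
  near=> t; split; near: t; [exact: nbhs_right_gt | exact: nbhs_right_le |].
  exact: cvg_within_filter step_cvg _ xA.
exact: filter_ex.
Unshelve. all: by end_near. Qed.

Section Polytope.
Variables (R : realType) (d m : nat) (a : 'I_m -> 'rV[R]_d) (b : 'I_m -> R).

Definition active x : {set 'I_m} := [set i | lform (a i) x == b i].

Lemma active_Omega x : Omega a b x -> #|active x| = 0%N.
Proof. by move=> Ox; apply: eq_card0 => i; rewrite !inE gt_eqF ?Ox. Qed.

Lemma cfun_closure x : closure (Omega a b) x -> cfun a b x = Some #|active x|.
Proof.
move=> cx; rewrite /cfun; case: (@asboolP (Omega a b x)) => [Ox|_].
  by rewrite active_Omega.
rewrite (asboolT cx); congr Some; apply: eq_card => i; rewrite inE.
by apply/idP/idP; rewrite in_setE.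
Qed.

Lemma closure_Omega_ge x j : closure (Omega a b) x -> b j <= lform (a j) x.
Proof.
move=> cx; have ge_closed : closed (lform (a j) @^-1` [set y | b j <= y]).
  by apply: preimage_closed => [y _|]; [exact: lform_continuous | exact: closed_ge].
by apply: ge_closed; apply: closureS cx => y Oy; exact/ltW/Oy.
Qed.

Lemma near_inactive x : closure (Omega a b) x ->
  \forall y \near x, forall i, i \notin active x -> b i < lform (a i) y.
Proof.
move=> cx; apply: (filter_forall (F := nbhs x)) => i.
have [iA|iA] := boolP (i \in active x); first exact: nearW.
have slack : b i < lform (a i) x.
  by rewrite lt_neqAle closure_Omega_ge // andbT eq_sym; rewrite inE in iA.
near=> y => _; near: y.
by apply: (cvgr_gt (lform (a i) x)) => //; exact: lform_continuous.
Unshelve. all: by end_near. Qed.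

Lemma Omega_local x0 : closure (Omega a b) x0 -> exists r : R, 0 < r /\
  Omega a b `&` eball x0 r =
  eball x0 r `&` (\bigcap_(i in [set i | i \in active x0]) Hplus a b i).
Proof.
move=> cx; have [r r0 inactive_r] := nbhs_eball (near_inactive cx).
exists r; split => //; apply/seteqP; split => y /= [].
  by move=> Oy By; split => // i _; exact: Oy.
move=> By Hy; split => // i; have [iA|iA] := boolP (i \in active x0).
  exact: Hy.
exact: inactive_r.
Qed.

Lemma lform_shift (c x u : 'rV[R]_d) t :
  lform c (x + t *: u) = lform c x + t * dotp c u.
Proof. by rewrite /lform dotpDr dotpZr. Qed.

Lemma active_shift x (u : 'rV[R]_d) t i : t != 0 -> i \in active x ->
  (i \in active (x + t *: u)) = (dotp (a i) u == 0).
Proof.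
move=> t0; rewrite !inE lform_shift => /eqP ->.
by rewrite -subr_eq0 addrAC subrr add0r mulf_eq0 (negbTE t0).
Qed.

Lemma active_shift_ge0 x (u : 'rV[R]_d) t i :
  0 < t -> closure (Omega a b) (x + t *: u) -> i \in active x -> 0 <= dotp (a i) u.
Proof.
move=> t0 cxt; rewrite inE => /eqP lx.
by have := closure_Omega_ge i cxt; rewrite lform_shift lx lerDl pmulr_rge0.
Qed.

End Polytope.

Section WeaklyIncoming.
Variables (R : realType) (d m p : nat) (a : 'I_m -> 'rV[R]_d) (b : 'I_m -> R).
Variable e : 'I_p -> 'rV[R]_d.
Hypothesis WI : weakly_incoming a b e.

Lemma weakly_incoming_step x : closure (Omega a b) x -> ~ Omega a b x ->
  exists (th : R) (j : 'I_p) (t : R), let x1 := x + t *: (th *: e j) in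
  [/\ th = 1 \/ th = -1, 0 < t, closure (Omega a b) x1,
      {subset active a b x1 <= active a b x} & (#|active a b x1| < #|active a b x|)%N].
Proof.
move=> cx nOx; have [eps [eps0 [th [thE [j lt_cfun]]]]] := WI (conj cx nOx).
have [t [t0 teps inactive_t]] := nbhs_small_step (th *: e j) (near_inactive cx) eps0.
exists th, j, t => x1; have := lt_cfun t t0 teps.
rewrite mulrC -scalerA -/x1 (cfun_closure cx) => lt_active.
have cx1 : closure (Omega a b) x1.
  apply: contrapT => ncx1; move: lt_active; rewrite /cfun asboolF ?asboolF //.
  by move/(@subset_closure _ (Omega a b)).
move: lt_active; rewrite (cfun_closure cx1) /= => lt_active; split => //.
move=> i; apply: contraTT => iA.
by rewrite inE gt_eqF // inactive_t.
Qed.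

End WeaklyIncoming.

Section IncomingChain.
Variables (R : realType) (d m p : nat) (a : 'I_m -> 'rV[R]_d) (b : 'I_m -> R).
Variable e : 'I_p -> 'rV[R]_d.
Hypothesis a_neq0 : forall i, a i != 0.

Lemma strictly_incoming_dotp u i : 0 < dotp (a i) u -> strictly_incoming a u i.
Proof.
by rewrite /strictly_incoming /nu dotpZr dotpC pmulr_rgt0 // invr_gt0 enorm_gt0.
Qed.

Lemma incoming_dotp u i : 0 <= dotp (a i) u -> incoming a u i.
Proof.
by rewrite /incoming /nu dotpZr dotpC pmulr_rge0 // invr_gt0 enorm_gt0.
Qed.

Record link := Link { sign : R; gen : 'I_p; face : 'I_m }.

Definition dir (l : link) : 'rV[R]_d := sign l *: e (gen l).

(* The list of triples [(theta_n, beta_n, i_n)] of the statement, in order. *)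
Fixpoint incoming_chain (L : seq link) : Prop :=
  if L is l :: L' then
    [/\ sign l = 1 \/ sign l = -1, strictly_incoming a (dir l) (face l),
        {in map face L', forall i, incoming a (dir l) i} & incoming_chain L']
  else True.

Lemma map_face_Link th j s : map face (map (Link th j) s) = s.
Proof. by elim: s => //= i s ->. Qed.

Lemma incoming_chain_cat th j s L :
  th = 1 \/ th = -1 ->
  {in s, forall i, strictly_incoming a (th *: e j) i} ->
  {in map face L, forall i, incoming a (th *: e j) i} ->
  incoming_chain L -> incoming_chain (map (Link th j) s ++ L).
Proof.
move=> thE + L_inc chL; elim: s => [|i s IH] //= s_strict.
split => //.
- exact/s_strict/mem_head.
- move=> k; rewrite map_cat mem_cat map_face_Link => /orP[ks|kL].
    by apply/ltW/s_strict; rewrite inE ks orbT.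
  exact: L_inc.
- by apply: IH => k ks; apply: s_strict; rewrite inE ks orbT.
Qed.

Lemma incoming_chain_nth L l0 n : incoming_chain L -> (n < size L)%N ->
  [/\ sign (nth l0 L n) = 1 \/ sign (nth l0 L n) = -1,
      strictly_incoming a (dir (nth l0 L n)) (face (nth l0 L n)) &
      forall n', (n < n' < size L)%N ->
        incoming a (dir (nth l0 L n)) (face (nth l0 L n'))].
Proof.
elim: L n => // l L IH [|n] /= [thE l_strict l_inc chL] n_lt.
  split => // -[|n'] //= n'_lt; apply: l_inc.
  by rewrite -(nth_map l0 (face l0)) // mem_nth ?size_map.
have [thE' strict' inc'] := IH n chL n_lt; split => // -[|n'] //=.
exact: inc'.
Qed.

Lemma incoming_chain_enum L : incoming_chain L -> uniq (map face L) ->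
  exists (beta : 'I_(size L) -> 'I_p) (theta : 'I_(size L) -> R)
         (ii : 'I_(size L) -> 'I_m),
     (forall n, theta n = 1 \/ theta n = -1) /\
     injective ii /\ (ii @: 'I_(size L) = [set i | i \in map face L])%SET /\
     (forall n, strictly_incoming a (theta n *: e (beta n)) (ii n)) /\
     (forall n n' : 'I_(size L), (n < n')%N ->
        incoming a (theta n *: e (beta n)) (ii n')).
Proof.
move=> chL uL; pose l n := tnth (in_tuple L) n.
have lE n n' : l n' = nth (l n) L n' by exact: tnth_nth.
have faceE n : face (l n) = tnth (map_tuple face (in_tuple L)) n by rewrite tnth_map.
exists (gen \o l), (sign \o l), (face \o l); split; last split; last split.
- by move=> n /=; rewrite (lE n); have [] := incoming_chain_nth (l n) chL (ltn_ord n).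
- by move=> n n' /=; rewrite !faceE; apply/tuple_uniqP.
- apply/setP => i; rewrite inE; apply/imsetP/idP => [[n _ ->]|].
    by rewrite /= faceE mem_tnth.
  move=> /(tnthP (map_tuple face (in_tuple L))) [n ->]; exists n => //.
  by rewrite /= faceE.
split => [n | n n' lt_nn'] /=.
  by rewrite (lE n n); have [] := incoming_chain_nth (l n) chL (ltn_ord n).
have [_ _ inc] := incoming_chain_nth (l n) chL (ltn_ord n).
by rewrite (lE n n) (lE n n'); apply: inc; rewrite lt_nn' ltn_ord.
Qed.

Hypothesis WI : weakly_incoming a b e.

Lemma exists_incoming_chain x : closure (Omega a b) x ->
  exists L, [/\ incoming_chain L, uniq (map face L) & map face L =i active a b x].
Proof.
have [n] := ubnP #|active a b x|; elim: n x => // n IH x lt_n cx.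
have [A0|A_neq0] := eqVneq #|active a b x| 0%N.
  by exists [::]; split => // i; rewrite (card0_eq A0).
have nOx : ~ Omega a b x by move/active_Omega; apply/eqP.
have [th [j [t [thE t0 cx1 sub lt]]]] := weakly_incoming_step WI cx nOx.
set x1 := x + t *: (th *: e j) in cx1 sub lt.
have [L1 [chL1 uL1 memL1]] := IH x1 (leq_trans lt lt_n) cx1.
have dot_ge0 i : i \in active a b x -> 0 <= dotp (a i) (th *: e j).
  exact: active_shift_ge0 t0 cx1.
exists (map (Link th j) (enum (active a b x :\: active a b x1)) ++ L1); split.
- apply: incoming_chain_cat => // [i|i]; last first.
    by rewrite memL1 => /sub/dot_ge0/incoming_dotp.
  rewrite mem_enum inE => /andP[iA1 iA]; apply: strictly_incoming_dotp.
  by rewrite lt_def dot_ge0 // andbT -(active_shift (th *: e j) (lt0r_neq0 t0) iA).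
- rewrite map_cat map_face_Link cat_uniq enum_uniq uL1 andbT /=.
  by apply/hasPn => i; rewrite memL1 => iA1; rewrite mem_enum inE iA1.
- move=> i; rewrite map_cat map_face_Link mem_cat mem_enum inE memL1.
  by case: (boolP (i \in active a b x1)) => [/sub ->|] /=; rewrite ?orbT ?orbF.
Qed.

End IncomingChain.

Arguments face {R m p}.

Theorem lemma1p3 (R : realType) (d m p : nat) (a : 'I_m -> 'rV[R]_d) (b : 'I_m -> R)
  (e : 'I_p -> 'rV[R]_d) :
  (2 <= d)%N ->
  (forall j, a j != 0) ->
  (exists x, Omega a b x) ->
  (exists M : R, forall x, Omega a b x -> enorm x <= M) ->
  weakly_incoming a b e ->
  forall (x0 : 'rV[R]_d) (k : nat),
    closure (Omega a b) x0 -> cfun a b x0 = Some k ->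
  exists r : R, 0 < r /\ exists I : {set 'I_m}, #|I| = k /\
     Omega a b `&` eball x0 r = eball x0 r `&` (\bigcap_(i in [set i | i \in I]) Hplus a b i)
  /\
  exists (beta : 'I_k -> 'I_p) (theta : 'I_k -> R) (ii : 'I_k -> 'I_m),
     (forall n, theta n = 1 \/ theta n = -1) /\
     injective ii /\ (ii @: 'I_k)%SET = I /\
     (forall n : 'I_k, strictly_incoming a (theta n *: e (beta n)) (ii n)) /\
     (forall n m' : 'I_k, (n < m')%N -> incoming a (theta n *: e (beta n)) (ii m')).
Proof.
move=> _ a_neq0 _ _ WI x0 k cx; rewrite cfun_closure // => -[<-].
have [r [r0 Omega_r]] := Omega_local cx.
have [L [chL uL memL]] := exists_incoming_chain a_neq0 WI cx.
have AL : active a b x0 = [set i | i \in map face L]%SET.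
  by apply/setP => i; rewrite -memL inE.
have size_L : #|active a b x0| = size L.
  by rewrite AL cardsE (card_uniqP uL) size_map.
exists r; split => //; exists (active a b x0); split => //; split => //.
by rewrite size_L AL; exact: incoming_chain_enum.
Qed.
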